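(* Let $m\equiv4\pmod8$, let $\mathfrak v_m$ be the irreducible $C(m)$-module, and let $\mathfrak v_m^p=\mathfrak w_+^p\oplus\mathfrak w_-^p$ be the decomposition into eigenspaces of $K_m$ with eigenvalues $\pm1$. (1) If $\mathcal L_1\subset\mathfrak w_+^p$ is a $C^+(m)$-submodule and $\mathcal L_1^\perp$ is its orthogonal complement in $\mathfrak w_+^p$, then $\mathcal L=\mathcal L_1+J_m(\mathcal L_1^\perp)$ is a Lagrangian subspace of $\mathfrak v_m^p$. (2) Every Lagrangian subspace of $\mathfrak v_m^p$ is of this form.
   Context: $C(m)$ is the real Clifford algebra of $\mathbb R^m$ (relations $z^2=-\langle z,z\rangle1$), $C^+(m)$ its even subalgebra (generated by products of two elements of $\mathbb R^m$). Fix an orthonormal basis $z_1,\dots,z_m$ of $\mathbb R^m$, $J_i=J_{z_i}$, and $K_m=J_1\cdots J_m$ (symmetric with $K_m^2=1$ when $m\equiv0\pmod4$). $\mathfrak v_m^p$ is the direct sum of $p$ copies of the irreducible module, with an inner product making each $J_z$ skew-symmetric, and bracket $\mathfrak v\wedge\mathfrak v\to\mathbb R^m$ given by $\langle z,[u,v]\rangle=(J_zu,v)$. A Lagrangian subspace is $\mathcal L\subset\mathfrak v_m^p$ with $[\mathcal L,\mathcal L]=0$ and $\dim\mathcal L=\frac12\dim\mathfrak v_m^p$. *)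

(* Vectors of v = R^N are ROW vectors 'rV[R]_N; a linear map
   is a matrix A acting by v |-> v *m A; subspaces are row spaces (mxalgebra).
   The inner product is (u,v) = u *m v^T. Basis index of R^m runs over 1..m. *)
From HB Require Import structures.
From mathcomp Require Import all_boot all_order all_algebra.
From mathcomp Require Import reals.
Set Implicit Arguments.
Unset Strict Implicit.
Unset Printing Implicit Defensive.
Import Order.TTheory GRing.Theory Num.Theory.
Local Open Scope ring_scope.

Section Clifford.
Variables (R : realType) (N m : nat) (J : nat -> 'M[R]_N).

Definition clifford_module : Prop :=
  (forall i, (1 <= i <= m)%N -> (J i)^T = - J i) /\
  (forall i, (1 <= i <= m)%N -> J i *m J i = - 1%:M) /\
  (forall i j, (1 <= i <= m)%N -> (1 <= j <= m)%N -> i != j ->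
      J i *m J j = - (J j *m J i)).

Definition cl_invariant (S : 'M[R]_N) : Prop :=
  forall i, (1 <= i <= m)%N -> (S *m J i <= S)%MS.

Definition cl_irreducible (S : 'M[R]_N) : Prop :=
  (0 < \rank S)%N /\ cl_invariant S /\
  forall T : 'M[R]_N, (T <= S)%MS -> cl_invariant T ->
    \rank T = 0%N \/ (T == S)%MS.

Definition sum_of_p_irreducibles (p : nat) : Prop :=
  exists W : 'I_p -> 'M[R]_N,
    (forall k, cl_irreducible (W k)) /\
    (\sum_(k < p) W k == 1%:M)%MS /\
    (\sum_(k < p) \rank (W k) = N)%N.

Definition clplus_invariant (S : 'M[R]_N) : Prop :=
  forall i j, (1 <= i <= m)%N -> (1 <= j <= m)%N ->
    (S *m (J i *m J j) <= S)%MS.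

(* matrix of the operator K_m = J_1 J_2 ... J_m (acting on row vectors the
   matrix is J m *m ... *m J 1) *)
Definition Kmx : 'M[R]_N := foldr (fun i A => A *m J i) 1%:M (iota 1 m).

Definition Wplus : 'M[R]_N := kermx (Kmx - 1%:M).

Definition perp_in_Wplus (S : 'M[R]_N) : 'M[R]_N := (Wplus :&: kermx S^T)%MS.

(* isotropic: [L, L] = 0, where <z,[u,v]> = (J_z u, v) *)
Definition isotropic (L : 'M[R]_N) : Prop :=
  forall u v : 'rV[R]_N, (u <= L)%MS -> (v <= L)%MS ->
    forall i, (1 <= i <= m)%N -> u *m J i *m v^T = 0.

Definition lagrangian (L : 'M[R]_N) : Prop :=
  isotropic L /\ (\rank L * 2 = N)%N.

End Clifford.

From HB Require Import structures.
From mathcomp Require Import all_boot all_order all_algebra.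
From mathcomp Require Import reals.
From mathcomp Require Import zify.
Set Implicit Arguments.
Unset Strict Implicit.
Unset Printing Implicit Defensive.
Import Order.TTheory GRing.Theory Num.Theory.
Local Open Scope ring_scope.

(* Since 4 divides m, K = J_1 ... J_m is a symmetric involution anticommuting
   with every J_i, so w_+ and w_- are orthogonal, each J_i swaps them, and
   dim w_+ = N/2.  For L1 <= w_+, L1 J_i lies in w_- and is orthogonal to L1,
   while C^+-invariance gives L1 J_i J_m <= L1, which is orthogonal to the
   complement P of L1 in w_+; hence L1 + P J_m is isotropic, of dimension
   dim L1 + (N/2 - dim L1).  Conversely a Lagrangian L satisfies
   L J_m = L^perp by counting dimensions, so L J_i J_m <= L: L is
   C^+-invariant, hence K-invariant, and L = (L /\ w_+) + (L /\ w_-).  With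
   L1 = L /\ w_+, the complement P is orthogonal to L1 and to w_-, hence to L,
   so P J_m <= L^perp J_m = L, and dimensions agree. *)

Section BilinearForms.
Variables (F : fieldType) (n : nat).
Implicit Types (A B : 'M[F]_n).

Lemma submx_orth p q r s (X : 'M[F]_(p, n)) (Y : 'M[F]_(q, n)) (S : 'M[F]_(r, n))
    (T : 'M[F]_(s, n)) :
  (X <= S)%MS -> (Y <= T)%MS -> S *m T^T = 0 -> X *m Y^T = 0.
Proof.
move=> /submxP[D ->] /submxP[E ->] ST0.
by rewrite trmx_mul -mulmxA (mulmxA S) ST0 mul0mx mulmx0.
Qed.

Lemma form_addsmx0 p q (S : 'M[F]_(p, n)) (T : 'M[F]_(q, n)) B :
    S *m B *m S^T = 0 -> S *m B *m T^T = 0 ->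
    T *m B *m S^T = 0 -> T *m B *m T^T = 0 ->
  (S + T)%MS *m B *m (S + T)%MS^T = 0.
Proof.
move=> SS ST TS TT; have ST_col : ((S + T)%MS <= col_mx S T)%MS by rewrite -addsmxE.
apply: submx_orth (submxMr B ST_col) ST_col _.
by rewrite tr_col_mx mul_col_mx mul_col_mx !mul_mx_row SS ST TS TT !row_mx0 col_mx0.
Qed.

Lemma form_skew_tr p q (X : 'M[F]_(p, n)) (Y : 'M[F]_(q, n)) B :
  B^T = - B -> Y *m B *m X^T = - (X *m B *m Y^T)^T.
Proof. by move=> B_skew; rewrite !trmx_mul trmxK B_skew mulNmx mulmxN opprK mulmxA. Qed.

Lemma isotropic_rank_leq p (X : 'M[F]_(p, n)) A :
  A \in unitmx -> X *m A *m X^T = 0 -> (\rank X * 2 <= n)%N.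
Proof.
move=> Aunit XAX0.
have /mxrankS : (X *m A <= kermx X^T)%MS by rewrite sub_kermx XAX0.
rewrite mxrankMfree ?row_free_unit // mxrank_ker mxrank_tr.
by have := rank_leq_col X; lia.
Qed.

Lemma isotropic_half_eqmx_ker p (X : 'M[F]_(p, n)) A :
  A \in unitmx -> X *m A *m X^T = 0 -> (\rank X * 2 = n)%N ->
  (X *m A == kermx X^T)%MS.
Proof.
move=> Aunit XAX0 rkX; have XA_ker : (X *m A <= kermx X^T)%MS by rewrite sub_kermx XAX0.
rewrite -(mxrank_leqif_eq XA_ker).2 mxrankMfree ?row_free_unit //.
by rewrite mxrank_ker mxrank_tr; apply/eqP; lia.
Qed.

End BilinearForms.

Lemma eqNmx (F : numFieldType) p q (M : 'M[F]_(p, q)) : (- M == M) = (M == 0).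
Proof.
apply/eqP/eqP => [NMM|->]; last by rewrite oppr0.
apply/matrixP => i j; have /matrixP/(_ i j) := NMM.
by rewrite !mxE => /eqP; rewrite eqNr => /eqP.
Qed.

Section InvolutionEigenspaces.
Variables (F : numFieldType) (n : nat) (K : 'M[F]_n).
Hypotheses (K_sym : K^T = K) (K_invol : K *m K = 1%:M).
Local Notation Wp := (eigenspace K 1).
Local Notation Wm := (eigenspace K (-1)).

Lemma eigenspace_pm_cap0 p (X : 'M_(p, n)) : (X <= Wp)%MS -> (X <= Wm)%MS -> X = 0.
Proof.
move=> /eigenspaceP XKp /eigenspaceP XKm; apply/eqP; rewrite -eqNmx.
by rewrite -scaleN1r -XKm XKp scale1r.
Qed.

Lemma eigenspace_pm_orth p q (X : 'M_(p, n)) (Y : 'M_(q, n)) :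
  (X <= Wp)%MS -> (Y <= Wm)%MS -> X *m Y^T = 0.
Proof.
move=> /eigenspaceP XKp /eigenspaceP XKm; apply/eqP; rewrite -eqNmx; apply/eqP.
rewrite -{2}[X]scale1r -XKp -mulmxA -{1}K_sym -trmx_mul XKm.
by rewrite linearZ /= scaleN1r mulmxN.
Qed.

Lemma eigenspace_mp_orth p q (X : 'M_(p, n)) (Y : 'M_(q, n)) :
  (X <= Wp)%MS -> (Y <= Wm)%MS -> Y *m X^T = 0.
Proof.
by move=> XWp YWm; apply: trmx_inj; rewrite trmx_mul trmxK eigenspace_pm_orth ?trmx0.
Qed.

Lemma eigenspace_swap p (X : 'M_(p, n)) A a :
  K *m A = - (A *m K) -> (X <= eigenspace K a)%MS -> (X *m A <= eigenspace K (- a))%MS.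
Proof.
move=> KA /eigenspaceP XK; apply/eigenspaceP.
have AK : A *m K = - (K *m A) by rewrite KA opprK.
by rewrite -mulmxA AK mulmxN mulmxA XK -scalemxAl scaleNr.
Qed.

Lemma eigenspace_pm_split p (X : 'M_(p, n)) :
  X = 2^-1 *: (X + X *m K) + 2^-1 *: (X - X *m K).
Proof.
rewrite -scalerDr addrACA subrr addr0 -mulr2n -scaler_nat scalerA.
by rewrite mulVf ?pnatr_eq0 ?scale1r.
Qed.

Lemma eigenspace_p_half p (X : 'M_(p, n)) : (2^-1 *: (X + X *m K) <= Wp)%MS.
Proof.
apply/eigenspaceP; rewrite scale1r -scalemxAl mulmxDl -mulmxA K_invol mulmx1.
by rewrite addrC.
Qed.

Lemma eigenspace_m_half p (X : 'M_(p, n)) : (2^-1 *: (X - X *m K) <= Wm)%MS.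
Proof.
apply/eigenspaceP; rewrite scaleN1r -scalemxAl mulmxBl -mulmxA K_invol mulmx1.
by rewrite -scalerN opprB.
Qed.

Lemma rank_eigenspace_pm : (\rank Wp + \rank Wm)%N = n.
Proof.
have WpWm_full : (1%:M <= Wp + Wm)%MS.
  rewrite [X in (X <= _)%MS]eigenspace_pm_split.
  exact: addmx_sub_adds (eigenspace_p_half _) (eigenspace_m_half _).
rewrite -mxrank_sum_cap (eigenspace_pm_cap0 (capmxSl Wp Wm) (capmxSr Wp Wm)).
rewrite mxrank0 addn0.
by apply/eqP; rewrite eqn_leq rank_leq_col -{1}(mxrank1 F n) mxrankS.
Qed.

Lemma rank_eigenspace_half A :
  A \in unitmx -> K *m A = - (A *m K) -> (\rank Wp * 2 = n)%N.
Proof.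
move=> Aunit KA; have rkA p (X : 'M_(p, n)) : \rank (X *m A) = \rank X.
  by rewrite mxrankMfree ?row_free_unit.
have Wp_le : (\rank Wp <= \rank Wm)%N.
  by rewrite -(rkA _ Wp) mxrankS // eigenspace_swap.
have Wm_le : (\rank Wm <= \rank Wp)%N.
  by rewrite -(rkA _ Wm) mxrankS // -[in X in (_ <= X)%MS](opprK 1) eigenspace_swap.
by have := rank_eigenspace_pm; lia.
Qed.

End InvolutionEigenspaces.

Section CliffordProducts.
Variables (R : comNzRingType) (n m : nat) (J : nat -> 'M[R]_n).
Local Notation inm i := (1 <= i <= m)%N.
Hypothesis J_skew : forall i, inm i -> (J i)^T = - J i.
Hypothesis J_sqr : forall i, inm i -> J i *m J i = - 1%:M.
Hypothesis J_anticomm :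
  forall i j, inm i -> inm j -> i != j -> J i *m J j = - (J j *m J i).

Definition prodJ (s : seq nat) : 'M[R]_n := foldr (fun i A => A *m J i) 1%:M s.

Lemma prodJ_comm s i : uniq s -> all (fun j => inm j) s -> inm i ->
  prodJ s *m J i = (-1) ^+ (size s + (i \in s)) *: (J i *m prodJ s).
Proof.
elim: s i => [|a s IHs] i /=; first by rewrite mul1mx mulmx1 scale1r.
move=> /andP[a_s s_uniq] /andP[a_in s_in] i_in.
have JaP : J a *m prodJ s = (-1) ^+ size s *: (prodJ s *m J a).
  by rewrite IHs // (negbTE a_s) addn0 scalerA -exprD -signr_odd oddD addbb scale1r.
rewrite in_cons; case: eqVneq => [->|i_a] /=.
  rewrite mulmxA JaP -scalemxAl -!mulmxA J_sqr // !mulmxN mulmx1 scalerA.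
  by rewrite -exprD -signr_odd !oddD /= addbT negbK addbb scale1r.
rewrite -mulmxA J_anticomm 1?eq_sym // mulmxN (mulmxA (prodJ s)) IHs //.
rewrite -scalemxAl -!mulmxA.
by rewrite addSn exprS mulN1r scaleNr.
Qed.

Lemma prodJ_orthogonal s : all (fun j => inm j) s -> (prodJ s)^T *m prodJ s = 1%:M.
Proof.
elim: s => [|a s IHs] /=; first by rewrite trmx1 mulmx1.
move=> /andP[a_in s_in]; rewrite trmx_mul -mulmxA (mulmxA _ (prodJ s)) IHs //.
by rewrite mul1mx J_skew // mulNmx J_sqr // opprK.
Qed.

Lemma prodJ_sqr s : uniq s -> all (fun j => inm j) s ->
  prodJ s *m prodJ s = (-1) ^+ 'C((size s).+1, 2) *: 1%:M.
Proof.
elim: s => [|a s IHs] /=; first by rewrite mulmx1 scale1r.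
move=> /andP[a_s s_uniq] /andP[a_in s_in].
have JaP : J a *m prodJ s = (-1) ^+ size s *: (prodJ s *m J a).
  rewrite prodJ_comm // (negbTE a_s) addn0 scalerA -exprD.
  by rewrite -signr_odd oddD addbb scale1r.
rewrite -mulmxA (mulmxA (J a)) JaP -scalemxAl -scalemxAr !mulmxA -(mulmxA _ (J a)).
rewrite J_sqr // mulmxN mulmx1 IHs // scalerN -scaleNr scalerA -mulN1r -!exprS -exprD.
by rewrite !binS !bin1 bin0 addnC addn1.
Qed.
End CliffordProducts.

Section Lagrangians.
Variables (R : realType) (N m : nat) (J : nat -> 'M[R]_N).
Local Notation inm i := (1 <= i <= m)%N.
Hypothesis J_skew : forall i, inm i -> (J i)^T = - J i.
Hypothesis J_sqr : forall i, inm i -> J i *m J i = - 1%:M.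
Hypothesis J_anticomm :
  forall i j, inm i -> inm j -> i != j -> J i *m J j = - (J j *m J i).
Hypotheses (m_gt0 : (0 < m)%N) (m_4 : (4 %| m)%N).

Local Notation K := (Kmx m J).
Local Notation Wp := (eigenspace (Kmx m J) 1).
Local Notation Wm := (eigenspace (Kmx m J) (-1)).
Local Notation A := (J m).

Let in_mm : inm m. Proof. by rewrite m_gt0 leqnn. Qed.

Let iota_in : all (fun j => inm j) (iota 1 m).
Proof. by apply/allP => i; rewrite mem_iota; lia. Qed.

Let Kmx_prodJ : K = prodJ J (iota 1 m). Proof. by []. Qed.

Lemma Kmx_anticomm i : inm i -> K *m J i = - (J i *m K).
Proof.
move=> i_in; rewrite Kmx_prodJ (prodJ_comm J_sqr J_anticomm) ?iota_uniq //.
rewrite size_iota mem_iota (_ : (1 <= i < 1 + m)%N); last by lia.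
have m_even : ~~ odd m by rewrite -dvdn2 (dvdn_trans _ m_4).
by rewrite -signr_odd oddD (negbTE m_even) expr1 scaleN1r.
Qed.

Lemma Kmx_invol : K *m K = 1%:M.
Proof.
rewrite Kmx_prodJ (prodJ_sqr J_sqr J_anticomm) ?iota_uniq // size_iota.
case/dvdnP: m_4 => k ->; have k4 : (k * 4 = (k * 2).*2)%N by lia.
rewrite bin2odd; last by rewrite /= oddM andbF.
by rewrite -signr_odd oddM /= k4 doubleK oddM !andbF scale1r.
Qed.

Lemma Kmx_sym : K^T = K.
Proof.
rewrite -[LHS]mulmx1 -Kmx_invol mulmxA Kmx_prodJ.
by rewrite (prodJ_orthogonal J_skew J_sqr) ?mul1mx.
Qed.

Lemma unitmx_J i : inm i -> J i \in unitmx.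
Proof.
move=> i_in; have /mulmx1_unit[] // : J i *m - J i = 1%:M.
by rewrite mulmxN J_sqr // opprK.
Qed.

Lemma clplus_invariant_prodJ (S : 'M[R]_N) s :
  clplus_invariant m J S -> all (fun j => inm j) s -> ~~ odd (size s) ->
  (S *m prodJ J s <= S)%MS.
Proof.
move=> S_inv; have [n] := ubnP (size s); elim: n s => // n IHn.
case=> [|a [|b s]] /=; [by rewrite mulmx1 | by rewrite andbT | ].
move=> size_lt /and3P[a_in b_in s_in]; rewrite negbK => s_even.
have S_s : (S *m prodJ J s <= S)%MS by apply: IHn => //; lia.
rewrite -(mulmxA (prodJ J s)) (mulmxA S).
exact: submx_trans (submxMr _ S_s) (S_inv b a b_in a_in).
Qed.

Lemma clplus_invariant_Kmx (S : 'M[R]_N) : clplus_invariant m J S -> (S *m K <= S)%MS.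
Proof.
move=> S_inv; apply: clplus_invariant_prodJ => //.
by rewrite size_iota -dvdn2 (dvdn_trans _ m_4).
Qed.

Lemma eigenspace_Kmx_mulJ i p (X : 'M_(p, N)) a :
  inm i -> (X <= eigenspace K a)%MS -> (X *m J i <= eigenspace K (- a))%MS.
Proof. by move=> i_in; apply: eigenspace_swap (Kmx_anticomm i_in). Qed.

Lemma mxrank_mulJ i p (X : 'M_(p, N)) : inm i -> \rank (X *m J i) = \rank X.
Proof. by move=> i_in; rewrite mxrankMfree ?row_free_unit ?unitmx_J. Qed.

Lemma rank_Wplus : (\rank Wp * 2 = N)%N.
Proof. exact: (rank_eigenspace_half Kmx_invol (unitmx_J in_mm) (Kmx_anticomm in_mm)). Qed.

Lemma isotropicP (L : 'M[R]_N) :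
  isotropic m J L <-> (forall i, inm i -> L *m J i *m L^T = 0).
Proof.
split=> [L_iso i i_in | LJL u v u_L v_L i i_in]; last first.
  exact: submx_orth (submxMr _ u_L) v_L (LJL i i_in).
apply/row_matrixP => r; rewrite row0 !row_mul; apply: trmx_inj; rewrite trmx0.
apply/row_matrixP => s; rewrite row0 trmx_mul trmxK row_mul trmx_mul mulmxA.
by rewrite J_skew // mulmxN mulNmx L_iso ?row_sub // oppr0.
Qed.

Section HalfOfWplus.
Variable L1 : 'M[R]_N.
Hypotheses (L1_Wp : (L1 <= Wp)%MS) (L1_inv : clplus_invariant m J L1).
Local Notation P := (Wp :&: kermx L1^T)%MS.

Let P_Wp : (P <= Wp)%MS. Proof. exact: capmxSl. Qed.

Let P_perp : L1 *m P^T = 0.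
Proof. by apply: trmx_inj; rewrite trmx_mul trmxK trmx0; apply/sub_kermxP/capmxSr. Qed.

Lemma isotropic_clplus_perp : isotropic m J (L1 + P *m A)%MS.
Proof.
apply/isotropicP => i i_in.
have L1JAP : L1 *m J i *m A *m P^T = 0.
  case/submxP: (L1_inv i_in in_mm) => D L1JA.
  by rewrite -(mulmxA L1) L1JA -mulmxA P_perp mulmx0.
have L1JPA : L1 *m J i *m (P *m A)^T = 0.
  by rewrite trmx_mul J_skew // mulNmx mulmxN mulmxA L1JAP oppr0.
apply: form_addsmx0 => //.
- by apply: (eigenspace_mp_orth Kmx_sym L1_Wp); apply: eigenspace_Kmx_mulJ.
- by rewrite (form_skew_tr _ _ (J_skew i_in)) L1JPA trmx0 oppr0.
rewrite trmx_mul J_skew // mulNmx mulmxN mulmxA.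
rewrite (eigenspace_mp_orth Kmx_sym P_Wp) ?oppr0 //.
have := eigenspace_Kmx_mulJ in_mm
  (eigenspace_Kmx_mulJ i_in (eigenspace_Kmx_mulJ in_mm P_Wp)).
by rewrite !opprK.
Qed.

Lemma rank_clplus_perp : (\rank (L1 + P *m A)%MS * 2 = N)%N.
Proof.
have cap0 : \rank (L1 :&: P *m A)%MS = 0%N.
  rewrite (eigenspace_pm_cap0 (submx_trans (capmxSl _ _) L1_Wp)) ?mxrank0 //.
  exact: submx_trans (capmxSr _ _) (eigenspace_Kmx_mulJ in_mm P_Wp).
have := mxrank_sum_cap L1 (P *m A); rewrite cap0 mxrank_mulJ //.
have := mxrank_sum_cap Wp (kermx L1^T); rewrite mxrank_ker mxrank_tr.
have := rank_leq_col (Wp + kermx L1^T)%MS; have := rank_leq_col L1.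
have := isotropic_rank_leq (unitmx_J in_mm)
  ((isotropicP _).1 isotropic_clplus_perp _ in_mm).
by have := rank_Wplus; lia.
Qed.

Lemma lagrangian_clplus_perp : lagrangian m J (L1 + P *m A)%MS.
Proof. by split; [apply: isotropic_clplus_perp | apply: rank_clplus_perp]. Qed.

End HalfOfWplus.

Lemma lagrangian_mulJ_perp (L : 'M[R]_N) p (X : 'M_(p, N)) :
  lagrangian m J L -> (X <= kermx L^T)%MS -> (X *m A <= L)%MS.
Proof.
case=> /isotropicP L_iso rkL X_perp.
have /andP[_ perp_LA] := isotropic_half_eqmx_ker (unitmx_J in_mm) (L_iso m in_mm) rkL.
have := submxMr A (submx_trans X_perp perp_LA).
by rewrite -mulmxA J_sqr // mulmxN mulmx1 eqmx_opp.
Qed.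

Lemma lagrangian_clplus_invariant (L : 'M[R]_N) :
  lagrangian m J L -> clplus_invariant m J L.
Proof.
move=> L_lag; have LJA i : inm i -> (L *m (J i *m A) <= L)%MS.
  move=> i_in; rewrite mulmxA; apply: lagrangian_mulJ_perp => //; rewrite sub_kermx.
  by case: L_lag => /isotropicP ->.
move=> i j i_in j_in; case: (eqVneq j m) => [->|j_m]; first exact: LJA.
have JiJj : J i *m J j = J i *m A *m (J j *m A).
  rewrite [RHS]mulmxA -(mulmxA (J i) A) (J_anticomm in_mm j_in) 1?eq_sym //.
  by rewrite mulmxN mulNmx -!mulmxA (J_sqr in_mm) !mulmxN mulmx1 opprK.
by rewrite JiJj mulmxA (submx_trans (submxMr _ (LJA i i_in))) ?LJA.
Qed.

Lemma clplus_invariant_capWplus (L : 'M[R]_N) :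
  clplus_invariant m J L -> clplus_invariant m J (L :&: Wp)%MS.
Proof.
move=> L_inv i j i_in j_in; rewrite sub_capmx (submx_trans _ (L_inv i j i_in j_in)).
  have := eigenspace_Kmx_mulJ j_in (eigenspace_Kmx_mulJ i_in (capmxSr L Wp)).
  by rewrite opprK mulmxA.
by rewrite submxMr ?capmxSl.
Qed.

Lemma lagrangian_eqmx_clplus_perp (L : 'M[R]_N) : lagrangian m J L ->
  (L == (L :&: Wp) + (Wp :&: kermx (L :&: Wp)^T) *m A)%MS.
Proof.
move=> L_lag; set L1 := (L :&: Wp)%MS; set P := (Wp :&: kermx L1^T)%MS.
have L_inv := lagrangian_clplus_invariant L_lag.
have LK := clplus_invariant_Kmx L_inv.
have Lp_L1 : (2^-1 *: (L + L *m K) <= L1)%MS.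
  by rewrite sub_capmx (eigenspace_p_half Kmx_invol) andbT scalemx_sub // addmx_sub ?LK.
have P_Lperp : (P <= kermx L^T)%MS.
  rewrite sub_kermx [in L^T](eigenspace_pm_split K L) raddfD /= mulmxDr.
  have Lm_Wm := eigenspace_m_half Kmx_invol L.
  rewrite (eigenspace_pm_orth Kmx_sym (capmxSl _ _) Lm_Wm) addr0.
  by apply/eqP; apply: submx_orth (capmxSr _ _) Lp_L1 _; rewrite mulmx_ker.
have L1P_L : (L1 + P *m A <= L)%MS by rewrite addsmx_sub capmxSl lagrangian_mulJ_perp.
have rk : (\rank (L1 + P *m A) * 2 = N)%N.
  exact: rank_clplus_perp (capmxSr L Wp) (clplus_invariant_capWplus L_inv).
have /andP[_ L_L1P] : (L1 + P *m A == L)%MS.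
  by rewrite -(mxrank_leqif_eq L1P_L).2; case: L_lag => _; lia.
by rewrite L_L1P.
Qed.
End Lagrangians.

Theorem lemma5p17 (R : realType) (m p N : nat) (J : nat -> 'M[R]_N) :
  (m %% 8 = 4)%N ->
  clifford_module m J ->
  sum_of_p_irreducibles m J p ->
  (forall L1 : 'M[R]_N,
     (L1 <= Wplus m J)%MS -> clplus_invariant m J L1 ->
     lagrangian m J (L1 + perp_in_Wplus m J L1 *m J m)%MS) /\
  (forall L : 'M[R]_N, lagrangian m J L ->
     exists L1 : 'M[R]_N,
       [/\ (L1 <= Wplus m J)%MS, clplus_invariant m J L1 &
           (L == L1 + perp_in_Wplus m J L1 *m J m)%MS]).
Proof.
move=> m_8 [J_skew [J_sqr J_anticomm]] _.
have m_gt0 : (0 < m)%N by lia.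
have m_4 : (4 %| m)%N by lia.
split=> [L1 L1_Wp L1_inv | L L_lag]; first exact: lagrangian_clplus_perp.
exists (L :&: Wplus m J)%MS; split; first exact: capmxSr.
  exact/clplus_invariant_capWplus/lagrangian_clplus_invariant.
exact: lagrangian_eqmx_clplus_perp.
Qed.
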